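(* For $n\ge0$ let $d_n$ be the number of FQ-legal index sets contained in $\{1,\dots,n\}$ (including the empty set; $d_0=1$); for $n\ge1$ let $c_n$ be the number of FQ-legal index sets contained in $\{1,\dots,n\}$ that contain $n$, with $c_0=1$; and for $n\ge1$ let $b_n$ be the number of FQ-legal index sets contained in $\{1,\dots,n\}$ that contain both $n$ and $n-2$. Then for all $n\ge7$, \[ d_n=c_n+c_{n-1}+\cdots+c_0=c_n+d_{n-1},\qquad c_n=d_{n-5}+c_{n-2}-b_{n-2},\qquad b_n=d_{n-7}, \] and for all $n\ge9$, \[ d_n=d_{n-1}+d_{n-2}-d_{n-3}+d_{n-5}-d_{n-9}. \]
   Context: An FQ-legal index set is a finite set $S$ of positive integers such that no two elements of $S$ differ by $1$, $3$ or $4$, and $S$ does not contain both $1$ and $3$. (These are exactly the index sets $\{\ell_1,\dots,\ell_t\}$ of FQ-legal decompositions $q_{\ell_1}+\cdots+q_{\ell_t}$ with respect to the Fibonacci Quilt sequence $(q_i)$, where an FQ-legal decomposition uses distinct indices with pairwise differences not in $\{1,3,4\}$ and not both indices $1$ and $3$.) First values: $(d_1,\dots,d_{13})=(2,3,4,6,8,11,15,21,30,42,59,82,114)$. *)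

From mathcomp Require Import all_boot all_order all_algebra.
Set Implicit Arguments. Unset Strict Implicit. Unset Printing Implicit Defensive.

(* An index set contained in {1,...,n} is represented as a set S of 'I_n.+1
   with 0 \notin S.  FQ-legal: no two elements differ by 1, 3 or 4, and not
   both 1 and 3 in S. *)
Definition fq_legal (m : nat) (S : {set 'I_m}) : bool :=
  [&& [forall i : 'I_m, (val i == 0) ==> (i \notin S)],
      [forall i : 'I_m, forall j : 'I_m,
         ((i \in S) && (j \in S) && (val i < val j)) ==>
           ((val j - val i) \notin [:: 1; 3; 4])] &
      ~~ [exists i : 'I_m, exists j : 'I_m,
           [&& i \in S, j \in S, val i == 1 & val j == 3]]].

Definition d (n : nat) : nat :=
  #|[set S : {set 'I_n.+1} | fq_legal S]|.

Definition c (n : nat) : nat :=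
  if n is 0 then 1 else
  #|[set S : {set 'I_n.+1} | fq_legal S && (ord_max \in S)]|.

(* number of FQ-legal index sets in {1..n} containing n and n-2
   (only used for n >= 5 so n-2 >= 1) *)
Definition b (n : nat) : nat :=
  #|[set S : {set 'I_n.+1} | [&& fq_legal S, ord_max \in S &
       [exists i : 'I_n.+1, (val i == n - 2) && (i \in S)]]]|.

From mathcomp Require Import all_boot all_order all_algebra.
From mathcomp Require Import zify.
Set Implicit Arguments. Unset Strict Implicit. Unset Printing Implicit Defensive.

(* All identities come from one counting principle: if the elements above k
   of an FQ-legal set are prescribed by a legal pattern whose elements are all
   at least k + 5 (and exceed 3), the part in {1..k} is an arbitrary FQ-legal
   set, so there are d k such sets.  An FQ-legal set containing n meets
   (n - 5, n) at most in n - 2, whence c n = d (n - 5) + b n; if it also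
   contains n - 2, it avoids (n - 7, n - 2), whence b n = d (n - 7).  The
   recurrence for d follows by eliminating c from d n = c n + d (n - 1). *)

Definition has_idx m (S : {set 'I_m.+1}) (x : nat) : bool :=
  (x <= m) && (inord x \in S).

Definition fq_legal_pred (p : nat -> bool) : Prop :=
  [/\ ~~ p 0,
      forall x y, p x -> p y -> x < y -> [/\ y - x <> 1, y - x <> 3 & y - x <> 4] &
      ~~ (p 1 && p 3)].

Definition agrees_above m k (S : {set 'I_m.+1}) (T : nat -> bool) : bool :=
  [forall i : 'I_m.+1, (k < i) ==> ((i \in S) == T i)].

Lemma val_inord m x : x <= m -> val (inord x : 'I_m.+1) = x.
Proof. exact: inordK. Qed.

Lemma has_idx_ord m (S : {set 'I_m.+1}) (i : 'I_m.+1) : has_idx S i = (i \in S).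
Proof. by rewrite /has_idx -ltnS ltn_ord inord_val. Qed.

Lemma has_idx_max m (S : {set 'I_m.+1}) : has_idx S m = (ord_max \in S).
Proof. exact: (has_idx_ord S ord_max). Qed.

Lemma eq_idx_set m (S S' : {set 'I_m.+1}) :
  (forall x, x <= m -> has_idx S x = has_idx S' x) -> S = S'.
Proof. by move=> eqSS'; apply/setP => i; rewrite -!has_idx_ord eqSS' // -ltnS. Qed.

Lemma fq_legalP m (S : {set 'I_m.+1}) : fq_legal S <-> fq_legal_pred (has_idx S).
Proof.
split.
- case/and3P => /forallP no0 /forallP gaps no13; split.
  + by apply/negP => /andP[_]; apply/negP; have := no0 (inord 0); rewrite val_inord.
  + move=> x y /andP[xm xS] /andP[ym yS] xy.
    move: (gaps (inord x)) => /forallP /(_ (inord y)).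
    rewrite xS yS !val_inord //= xy !inE => /negP gap.
    by split=> E; apply: gap; rewrite E.
  + apply/negP => /andP[/andP[m1 S1] /andP[m3 S3]]; case/negP: no13.
    by apply/existsP; exists (inord 1); apply/existsP; exists (inord 3); rewrite S1 S3 !val_inord.
- case=> no0 gaps no13; apply/and3P; split.
  + by apply/forallP => i; apply/implyP => /eqP i0; rewrite -has_idx_ord i0.
  + apply/forallP => i; apply/forallP => j; apply/implyP => /andP[/andP[iS jS] ij].
    rewrite -!has_idx_ord in iS jS; have [g1 g3 g4] := gaps _ _ iS jS ij.
    by rewrite !inE; apply/negP => /or3P[] /eqP.
  + apply/negP => /existsP[i /existsP[j /and4P[iS jS /eqP i1 /eqP j3]]].
    by case/negP: no13; rewrite -j3 -i1 !has_idx_ord iS jS.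
Qed.

Lemma fq_legal_pred_sub (p q : nat -> bool) :
  fq_legal_pred p -> (forall x, q x -> p x) -> fq_legal_pred q.
Proof.
case=> no0 gaps no13 qp; split.
- by apply: contra no0; apply: qp.
- by move=> x y /qp px /qp py; apply: gaps.
- by apply: contra no13 => /andP[/qp -> /qp ->].
Qed.

Lemma fq_legal_pred_glue k (p T : nat -> bool) :
  fq_legal_pred p ->
  (forall x y, T x -> T y -> x < y -> [/\ y - x <> 1, y - x <> 3 & y - x <> 4]) ->
  (forall t, k < t -> T t -> k + 5 <= t /\ 3 < t) ->
  fq_legal_pred (fun x => if x <= k then p x else T x).
Proof.
case=> no0 gaps no13 gapsT farT; split.
- by rewrite leq0n.
- move=> x y; case: (leqP x k) => xk; case: (leqP y k) => yk px py xy.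
  + exact: gaps.
  + by have [] := farT y yk py; split; lia.
  + lia.
  + exact: gapsT.
- case: (leqP 3 k) => k3; first by rewrite (leq_trans _ k3).
  by case: ifP => _; apply/negP => /andP[_ /(farT 3 k3)] []; lia.
Qed.

Lemma agrees_aboveP m k (S : {set 'I_m.+1}) (T : nat -> bool) :
  reflect (forall x, k < x <= m -> has_idx S x = T x) (agrees_above k S T).
Proof.
apply: (iffP forallP) => [agree x /andP[kx xm] | agree i].
- by move: (agree (inord x)); rewrite inordK ?ltnS // kx => /eqP <-; rewrite /has_idx xm.
- by apply/implyP => ki; rewrite -has_idx_ord agree // ki -ltnS ltn_ord.
Qed.

Lemma card_legal_agrees_above m k (T : nat -> bool) :
  k <= m ->
  (forall x y, T x -> T y -> x < y -> [/\ y - x <> 1, y - x <> 3 & y - x <> 4]) ->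
  (forall t, k < t -> T t -> k + 5 <= t /\ 3 < t) ->
  #|[set S : {set 'I_m.+1} | fq_legal S && agrees_above k S T]| = d k.
Proof.
move=> km gapsT farT.
pose ext (R : {set 'I_k.+1}) := [set j : 'I_m.+1 | if j <= k then has_idx R j else T j].
have has_idx_ext R x : x <= m -> has_idx (ext R) x = if x <= k then has_idx R x else T x.
  by move=> xm; rewrite {1}/has_idx xm inE inordK.
have ext_inj : injective ext.
  move=> R1 R2 eqR; apply: eq_idx_set => x xk; have xm := leq_trans xk km.
  by move: (has_idx_ext R1 x xm); rewrite eqR has_idx_ext // xk => ->.
rewrite /d -(card_imset _ ext_inj); apply: eq_card => S; rewrite inE.
apply/idP/imsetP.
- case/andP => /fq_legalP legS /agrees_aboveP agree.
  exists [set i : 'I_k.+1 | has_idx S i].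
  + rewrite inE; apply/fq_legalP; apply: (fq_legal_pred_sub legS) => x.
    by rewrite /has_idx inE => /andP[xk]; rewrite inordK.
  + apply: eq_idx_set => x xm; rewrite has_idx_ext //; case: ifP => xk.
      by rewrite /has_idx inE inordK ?ltnS // xk.
    by rewrite agree // ltnNge xk.
- case=> R; rewrite inE => /fq_legalP legR ->; apply/andP; split.
  + apply/fq_legalP; apply: (fq_legal_pred_sub (fq_legal_pred_glue legR gapsT farT)).
    by move=> x Sx; move: Sx (Sx) => /andP[xm _]; rewrite has_idx_ext.
  + by apply/agrees_aboveP => x /andP[kx xm]; rewrite has_idx_ext // leqNgt kx.
Qed.

Lemma fq_legal_pred_below_top (p : nat -> bool) m x :
  fq_legal_pred p -> p m -> p x -> m - 5 < x < m -> x = m - 2.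
Proof. by case=> _ gaps _ pm px /andP[lo hi]; have [] := gaps _ _ px pm hi; lia. Qed.

Lemma fq_legal_pred_below_top2 (p : nat -> bool) m x :
  fq_legal_pred p -> p m -> p (m - 2) -> p x -> m - 7 < x < m - 2 -> False.
Proof.
case=> _ gaps _ pm pm2 px /andP[lo hi].
by have [] := gaps _ _ px pm (leq_trans hi (leq_subr 2 m));
   have [] := gaps _ _ px pm2 hi; lia.
Qed.

Lemma d_rec m : 0 < m -> d m = c m + d m.-1.
Proof.
case: m => // m _; rewrite /c /=.
rewrite {1}/d -(cardsID [set S : {set 'I_m.+2} | ord_max \in S] [set S | fq_legal S]).
congr (_ + _); first by apply: eq_card => S; rewrite !inE.
rewrite -(@card_legal_agrees_above m.+1 m xpred0) //.
apply: eq_card => S; rewrite !inE andbC; congr (_ && _).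
apply/idP/agrees_aboveP => [mS x /andP[mx xm] | agree].
- have -> : x = m.+1 by lia.
  by rewrite has_idx_max (negbTE mS).
- by rewrite -has_idx_max agree // !ltnSn.
Qed.

Lemma exists_idx m (S : {set 'I_m.+1}) x :
  [exists i : 'I_m.+1, (val i == x) && (i \in S)] = has_idx S x.
Proof.
apply/existsP/idP => [[i /andP[/eqP <- iS]] | /andP[xm xS]]; first by rewrite has_idx_ord.
by exists (inord x); rewrite val_inord ?eqxx.
Qed.

Lemma card_legal_top_no_top2 m : 5 <= m ->
  #|[set S : {set 'I_m.+1} | [&& fq_legal S, ord_max \in S & ~~ has_idx S (m - 2)]]|
  = d (m - 5).
Proof.
move=> m5; rewrite -(@card_legal_agrees_above m (m - 5) (pred1 m)); first last.
- by move=> t _ /eqP ->; lia.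
- by move=> x y /eqP -> /eqP ->; lia.
- lia.
apply: eq_card => S; rewrite !inE -has_idx_max.
apply: andb_id2l => /fq_legalP legS; apply/idP/agrees_aboveP.
- case/andP => Sm Sm2 x /andP[lo hi] /=.
  case: (eqVneq x m) => [-> // | xm]; apply/negbTE/negP => Sx.
  have x_m2 : x != m - 2 by apply: contraNneq Sm2 => <-.
  by have := fq_legal_pred_below_top legS Sm Sx; lia.
- by move=> agree; rewrite !agree /= ?eqxx; lia.
Qed.

Lemma c_eq_d_b m : 5 <= m -> c m = d (m - 5) + b m.
Proof.
case: m => // m m5; rewrite /c /b -card_legal_top_no_top2 //.
rewrite -(cardsID [set S | has_idx S (m.+1 - 2)] [set S | fq_legal S && (ord_max \in S)]).
rewrite addnC; congr (_ + _); apply: eq_card => S; rewrite !inE ?exists_idx.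
- by rewrite andbC andbA.
- by rewrite andbA.
Qed.

Lemma b_eq m : 7 <= m -> b m = d (m - 7).
Proof.
move=> m7; rewrite /b.
rewrite -(@card_legal_agrees_above m (m - 7) (fun x => (x == m) || (x == m - 2))); first last.
- by move=> t _ /orP[] /eqP ->; lia.
- by move=> x y /orP[] /eqP -> /orP[] /eqP -> xy; split; lia.
- lia.
apply: eq_card => S; rewrite !inE exists_idx -has_idx_max.
apply: andb_id2l => /fq_legalP legS; apply/idP/agrees_aboveP.
- case/andP => Sm Sm2 x /andP[lo hi] /=.
  case: (eqVneq x m) => [-> | xm]; first by rewrite Sm.
  case: (eqVneq x (m - 2)) => [-> | xm2]; first by rewrite Sm2.
  apply/negbTE/negP => Sx; case: (ltnP x (m - 2)) => x_m2.
  + by apply: (fq_legal_pred_below_top2 legS Sm Sm2 Sx); lia.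
  + by have := fq_legal_pred_below_top legS Sm Sx; lia.
- by move=> agree; rewrite !agree /= ?eqxx ?orbT; lia.
Qed.

Lemma d0 : d 0 = 1.
Proof.
rewrite /d (_ : [set S : {set 'I_1} | fq_legal S] = [set set0]) ?cards1 //.
apply/setP => S; rewrite !inE; apply/idP/eqP => [/fq_legalP[no0 _ _] | ->].
- apply: eq_idx_set => x; rewrite leqn0 => /eqP ->.
  by rewrite (negbTE no0) /has_idx inE andbF.
- apply/fq_legalP; apply: (@fq_legal_pred_sub xpred0) => [|x]; first by split.
  by rewrite /has_idx inE andbF.
Qed.

Lemma d_sum_c n : d n = \sum_(0 <= k < n.+1) c k.
Proof.
elim: n => [|n IH]; first by rewrite big_nat1 d0.
by rewrite big_nat_recr //= -IH d_rec // addnC.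
Qed.

Local Open Scope ring_scope.

Theorem mainTheorem10 :
  (forall n : nat, (7 <= n)%N ->
     [/\ d n = (\sum_(0 <= k < n.+1) c k)%N,
         d n = (c n + d n.-1)%N,
         (c n)%:Z = (d (n - 5))%:Z + (c (n - 2))%:Z - (b (n - 2))%:Z &
         b n = d (n - 7)]) /\
  (forall n : nat, (9 <= n)%N ->
     (d n)%:Z = (d n.-1)%:Z + (d (n - 2))%:Z - (d (n - 3))%:Z
                + (d (n - 5))%:Z - (d (n - 9))%:Z).
Proof.
have c_eq m : (7 <= m)%N -> c m = (d (m - 5) + d (m - 7))%N.
  by move=> m_ge; rewrite c_eq_d_b ?b_eq //; lia.
split=> n n_ge.
- have c_n2 : c (n - 2) = (d (n - 7) + b (n - 2))%N.
    by rewrite c_eq_d_b -?subnDA //; lia.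
  split; [exact: d_sum_c | apply: d_rec; lia | | exact: b_eq].
  by rewrite c_eq // c_n2; lia.
- have c_n2 : c (n - 2) = (d (n - 7) + d (n - 9))%N.
    by rewrite c_eq -?subnDA //; lia.
  have d_n2 : d (n - 2) = (c (n - 2) + d (n - 3))%N.
    by rewrite d_rec -?subn1 -?subnDA //; lia.
  have d_n : d n = (d (n - 5) + d (n - 7) + d n.-1)%N.
    by rewrite d_rec ?c_eq //; lia.
  by rewrite d_n d_n2 c_n2; lia.
Qed.
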